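(* Let $R>0$, $n\in\mathbb N$, $Q,K,V\in\mathbb R^{k\times d}$, $A:=K^\top Q/\sqrt k$. Let $f^m$ be masked self-attention and $F^m$ mean-field masked self-attention with parameters $(A,V)$. Then $$\mathrm{Lip}^{\|\cdot\|_F}\big(f^m_{|B_R^n}\big)\le\mathrm{Lip}^{d_2}\big(F^m_{|\mathcal P([0,1]\times B_R)}\big).$$
   Context: Masked self-attention: for $X=(x_1,\dots,x_n)\in(\mathbb R^d)^n$, $f^m(X)_i=V\sum_{j=1}^iP_{ij}x_j$ with $P_{ij}=\exp(x_i^\top A^\top x_j)/\sum_{l=1}^i\exp(x_i^\top A^\top x_l)$ for $j\le i$. $\mathrm{Lip}^{\|\cdot\|_F}(f^m_{|\mathcal X})=\sup_{X\ne Y\in\mathcal X}\|f^m(X)-f^m(Y)\|_F/\|X-Y\|_F$ with Frobenius norm $\|X\|_F=(\sum_i|x_i|^2)^{1/2}$. $B_R\subset\mathbb R^d$ is the closed ball of center 0, radius $R$. Mean-field masked self-attention: for a compactly supported probability measure $\bar\mu$ on $[0,1]\times\mathbb R^d$, $F^m(\bar\mu):=(\Gamma_{\bar\mu})_\sharp\bar\mu$ (pushforward), where $\Gamma_{\bar\mu}(s,x)=\Big(s,\dfrac{\int\exp(x^\top A^\top y)Vy\mathbf 1_{\tau\le s}d\bar\mu(\tau,y)}{\int\exp(x^\top A^\top y)\mathbf 1_{\tau\le s}d\bar\mu(\tau,y)}\Big)$. Distance $d_p$ ($p\ge1$): if $\bar\mu,\bar\nu$ have the same first marginal $\theta$ on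 $[0,1]$, disintegrate $d\bar\mu(\tau,x)=d\theta(\tau)d\mu^\tau(x)$, $d\bar\nu(\tau,x)=d\theta(\tau)d\nu^\tau(x)$ and set $d_p(\bar\mu,\bar\nu)=\big(\int_0^1W_p(\mu^\tau,\nu^\tau)^pd\theta(\tau)\big)^{1/p}$, where $W_p$ is the $p$-Wasserstein distance; otherwise $d_p(\bar\mu,\bar\nu)=+\infty$. $\mathcal P([0,1]\times B_R)$ is the set of probability measures supported in $[0,1]\times B_R$, and $\mathrm{Lip}^{d_2}(F^m_{|\mathcal X})$ is the supremum of $d_2(F^m(\bar\mu),F^m(\bar\nu))/d_2(\bar\mu,\bar\nu)$ over pairs $\bar\mu\ne\bar\nu$ in $\mathcal X$ with the same first marginal. *)

From HB Require Import structures.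
From mathcomp Require Import all_boot all_order all_algebra.
From mathcomp Require Import all_classical all_reals all_analysis measurable_realfun.
Set Implicit Arguments. Unset Strict Implicit. Unset Printing Implicit Defensive.
Import Order.TTheory GRing.Theory Num.Theory.
Import numFieldNormedType.Exports.
Local Open Scope classical_set_scope.
Local Open Scope ring_scope.

Section Defs.
Context {R : realType}.

(* Vectors of R^d are d-tuples (these carry the product Borel sigma-algebra). *)
Definition vdot {d} (x y : d.-tuple R) : R := \sum_(i < d) tnth x i * tnth y i.
Definition vnorm {d} (x : d.-tuple R) : R := Num.sqrt (vdot x x).
Definition vsub {d} (x y : d.-tuple R) : d.-tuple R :=
  [tuple tnth x i - tnth y i | i < d].
Definition mxapp {m d} (M : 'M[R]_(m, d)) (x : d.-tuple R) : m.-tuple R :=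
  [tuple \sum_(j < d) M i j * tnth x j | i < m].

Definition attnA {k d} (Q K : 'M[R]_(k, d)) : 'M[R]_d :=
  (Num.sqrt (k%:R))^-1 *: (K^T *m Q).

Definition cball {d} (r : R) : set (d.-tuple R) := [set x | vnorm x <= r].

(* x_i^T A^T x_j = (A x_i) . x_j *)
Definition mask_weight {n d} (A : 'M[R]_d) (X : 'I_n -> d.-tuple R) (i j : 'I_n) : R :=
  expR (vdot (mxapp A (X i)) (X j)) /
  \sum_(l < n | (l <= i)%N) expR (vdot (mxapp A (X i)) (X l)).

Definition masked_sa {n d k} (A : 'M[R]_d) (V : 'M[R]_(k, d))
    (X : 'I_n -> d.-tuple R) : 'I_n -> k.-tuple R :=
  fun i => mxapp V [tuple \sum_(j < n | (j <= i)%N) mask_weight A X i j * tnth (X j) c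
                   | c < d].

Definition frob {n d} (X : 'I_n -> d.-tuple R) : R :=
  Num.sqrt (\sum_(i < n) vdot (X i) (X i)).

Definition Lip_frob {n d k} (f : ('I_n -> d.-tuple R) -> ('I_n -> k.-tuple R))
    (S : set ('I_n -> d.-tuple R)) : \bar R :=
  ereal_sup [set z | exists X Y, [/\ S X, S Y, X <> Y &
    z = (frob (fun i => vsub (f X i) (f Y i)) / frob (fun i => vsub (X i) (Y i)))%:E]].

Definition Gamma {d k} (A : 'M[R]_d) (V : 'M[R]_(k, d))
    (mu : {measure set (R * d.-tuple R)%type -> \bar R})
    (p : R * d.-tuple R) : R * k.-tuple R :=
  let s := p.1 in let x := p.2 in
  (s, [tuple
        Rintegral mu setT (fun z : R * d.-tuple R =>
          expR (vdot (mxapp A x) z.2) * tnth (mxapp V z.2) i * (if z.1 <= s then 1 else 0)) /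
        Rintegral mu setT (fun z : R * d.-tuple R =>
          expR (vdot (mxapp A x) z.2) * (if z.1 <= s then 1 else 0))
      | i < k]).

Definition Fm {d k} (A : 'M[R]_d) (V : 'M[R]_(k, d))
    (mu : probability (R * d.-tuple R)%type R) : set (R * k.-tuple R)%type -> \bar R :=
  pushforward mu (Gamma A V mu).

Definition Wp {d} (p : R) (mu nu : set (d.-tuple R) -> \bar R) : \bar R :=
  poweR (ereal_inf [set c | exists gam : probability (d.-tuple R * d.-tuple R)%type R,
    [/\ (forall B, measurable B -> gam (B `*` setT) = mu B),
        (forall B, measurable B -> gam (setT `*` B) = nu B) &
        c = (\int[gam]_z ((vnorm (vsub z.1 z.2)) `^ p)%:E)%E]]) p^-1.

(* mu(tau,x) = theta(tau) mu^tau(x): disintegration of mu w.r.t. theta *)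
Definition disintegration {d} (mu : set (R * d.-tuple R)%type -> \bar R)
    (theta : probability R R) (muk : R -> probability (d.-tuple R) R) : Prop :=
  (forall B, measurable B -> measurable_fun [set: R] ((fun t : R => muk t B) : R -> \bar R)) /\
  (forall A B, measurable A -> measurable B ->
     mu (A `*` B) = (\int[theta]_(t in A) muk t B)%E).

(* d_p: +oo when there is no common first marginal (ereal_inf set0 = +oo) *)
Definition dp {d} (p : R) (mu nu : set (R * d.-tuple R)%type -> \bar R) : \bar R :=
  ereal_inf [set c | exists (theta : probability R R)
                           (muk nuk : R -> probability (d.-tuple R) R),
    [/\ disintegration mu theta muk, disintegration nu theta nuk &
        c = poweR (\int[theta]_t poweR (Wp p (muk t) (nuk t)) p)%E p^-1]].

Definition same_first_marginal {d} (mu nu : set (R * d.-tuple R)%type -> \bar R) :=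
  forall A, measurable A -> mu (A `*` setT) = nu (A `*` setT).

Definition Lip_dp {d k} (p : R)
    (F : probability (R * d.-tuple R)%type R -> set (R * k.-tuple R)%type -> \bar R)
    (S : set (probability (R * d.-tuple R)%type R)) : \bar R :=
  ereal_sup [set z | exists mu nu : probability (R * d.-tuple R)%type R,
    [/\ S mu, S nu, (mu : set _ -> \bar R) <> nu, same_first_marginal mu nu &
        z = (dp p (F mu) (F nu) * (dp p mu nu)^-1)%E]].

Definition Psupp {d} (r : R) : set (probability (R * d.-tuple R)%type R) :=
  [set mu | mu (~` ([set t : R | 0 <= t <= 1] `*` cball r)) = 0%E].

End Defs.

(* A configuration X = (x_0, ..., x_m) is encoded as the probability measure
   mu_X = 1/(m+1) sum_i delta_(i/(m+1), x_i) on [0,1] x B_R.  Conditioning on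
   tau <= i/(m+1) keeps exactly the tokens j <= i, so F^m(mu_X) = mu_(f^m(X)).
   Any disintegration of mu_X along its time marginal must put delta_(x_i) over
   the time i/(m+1), and the only coupling of two Dirac masses is their product,
   so d_2(mu_X, mu_Y) = (m+1)^(-1/2) ||X - Y||_F.  Every difference quotient of
   f^m on B_R^(m+1) is therefore a difference quotient of F^m. *)

From HB Require Import structures.
From mathcomp Require Import all_boot all_order all_algebra.
From mathcomp Require Import all_classical all_reals all_analysis measurable_realfun.
Set Implicit Arguments. Unset Strict Implicit. Unset Printing Implicit Defensive.
Import Order.TTheory GRing.Theory Num.Theory.
Local Open Scope classical_set_scope.
Local Open Scope ring_scope.

Section empirical_measure.
Context d (T : measurableType d) (R : realType) (m : nat) (p : 'I_m.+1 -> T).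
Local Notation w := ((m.+1%:R)^-1 : R)%R.
Local Open Scope ereal_scope.

Definition empirical (A : set T) : \bar R :=
  w%:E * \sum_(i < m.+1) \d_(p i) A.

Local Notation scaled_diracs :=
  (mscale (w%:nng)%R (msum (fun k => \d_(p (inord k))) m.+1)).

Let empirical_mscale : empirical = scaled_diracs.
Proof.
apply/funext => A; rewrite /empirical /mscale /msum; congr (_ * _).
by apply: eq_bigr => i _; rewrite inord_val.
Qed.

Let empirical0 : empirical set0 = 0.
Proof. by rewrite empirical_mscale measure0. Qed.

Let empirical_ge0 A : 0 <= empirical A.
Proof. by rewrite empirical_mscale measure_ge0. Qed.

Let empirical_sigma_additive : semi_sigma_additive empirical.
Proof. by rewrite empirical_mscale; exact: measure_semi_sigma_additive. Qed.

HB.instance Definition _ := isMeasure.Build _ _ _ empirical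
  empirical0 empirical_ge0 empirical_sigma_additive.

Let empiricalT : empirical setT = 1.
Proof.
rewrite /empirical (eq_bigr (fun _ => 1)) => [|i _]; last by rewrite diracT.
by rewrite sumEFin sumr_const card_ord -EFinM mulVf.
Qed.

HB.instance Definition _ := Measure_isProbability.Build _ _ _ empirical empiricalT.

Lemma ge0_integral_empirical (f : T -> \bar R) :
  measurable_fun setT f -> (forall x, 0 <= f x) ->
  \int[empirical]_x f x = w%:E * \sum_(i < m.+1) f (p i).
Proof.
move=> mf f0; rewrite (eq_measure_integral scaled_diracs) => [|A _ _]; last first.
  exact: (congr1 (fun mu => mu A) empirical_mscale).
rewrite ge0_integral_mscale // ge0_integral_measure_sum //; congr (_ * _).
apply: eq_bigr => i _.
by rewrite integral_dirac // diracT mul1e inord_val.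
Qed.

Lemma integral_empirical (f : T -> R) : measurable_fun setT f ->
  \int[empirical]_x (f x)%:E = (w * \sum_(i < m.+1) f (p i))%:E.
Proof.
move=> mf; have mF : measurable_fun setT (EFin \o f) by exact/measurable_EFinP.
rewrite integralE !ge0_integral_empirical //; last 2 first.
- exact: measurable_funeneg.
- exact: measurable_funepos.
under eq_bigr do rewrite funeposE /= -EFin_max.
under [X in _ - _ * X]eq_bigr do rewrite funenegE /= -EFin_max.
rewrite !sumEFin -!EFinM -EFinB -mulrBr -sumrB; congr (_ * _)%:E.
apply: eq_bigr => i _; have [f0|f0] := leP 0%R (f (p i)).
  by rewrite max_r ?subr0 // oppr_le0.
by rewrite max_l ?sub0r ?opprK // oppr_ge0 ltW.
Qed.

Lemma Rintegral_empirical (f : T -> R) : measurable_fun setT f ->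
  Rintegral empirical setT f = (w * \sum_(i < m.+1) f (p i))%R.
Proof. by move=> mf; rewrite /Rintegral integral_empirical. Qed.

End empirical_measure.
Arguments empirical {d T R m} p.

Lemma pushforward_empirical d d' (T : measurableType d) (T' : measurableType d')
    (R : realType) m (p : 'I_m.+1 -> T) (g : T -> T') :
  pushforward (empirical p : set T -> \bar R) g = empirical (g \o p).
Proof.
by apply/funext => B; rewrite /pushforward /empirical.
Qed.

Lemma sum_indic_inj (R : realType) (T : Type) n (p : 'I_n -> T) (c : 'I_n -> R) i :
  injective p -> \sum_(j < n) \1_[set p j] (p i) * c j = c i.
Proof.
move=> p_inj; rewrite (bigD1 i) //= big1 ?addr0 => [|j ji].
  by rewrite indicE mem_set // mul1r.
by rewrite indicE memNset ?mul0r //= => /p_inj/eqP; rewrite eq_sym (negbTE ji).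
Qed.

Section positions.
Context (R : realType) (m : nat).

Definition position (i : 'I_m.+1) : R := i%:R / m.+1%:R.

Lemma ler_position i j : (position i <= position j) = (i <= j)%N.
Proof. by rewrite /position ler_pM2r ?invr_gt0 ?ltr0n // ler_nat. Qed.

Lemma position_inj : injective position.
Proof. by move=> i j h; apply/val_inj/eqP; rewrite eqn_leq -!ler_position h lexx. Qed.

Lemma position_itv i : 0 <= position i <= 1.
Proof. by rewrite divr_ge0 ?ler0n //= ler_pdivrMr ?ltr0n // mul1r ler_nat ltnW. Qed.

Lemma sum_mask_position (f : 'I_m.+1 -> R) i :
  \sum_(j < m.+1) f j * (if position j <= position i then 1 else 0) =
  \sum_(j < m.+1 | (j <= i)%N) f j.
Proof.
rewrite [RHS]big_mkcond; apply: eq_bigr => j _.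
by rewrite ler_position; case: ifP; rewrite ?mulr1 ?mulr0.
Qed.

End positions.
Arguments position {R m} i.

Lemma measurable_fst_le d (T : measurableType d) (R : realType) (s : R) :
  measurable_fun setT (fun z : R * T => if z.1 <= s then 1 else 0 : R).
Proof.
rewrite (_ : (fun z => _) = \1_(`]-oo, s]) \o fst); last first.
  apply/funext => z /=; rewrite indicE; case: leP => zs.
    by rewrite mem_set //= in_itv /= zs.
  by rewrite memNset //= in_itv /= leNgt zs.
by apply: measurableT_comp => //; exact: measurable_indic.
Qed.

Section vectors.
Context (R : realType) (d : nat).
Local Notation tup := (d.-tuple R).

Lemma vdot_ge0 (x : tup) : 0 <= vdot x x.
Proof. by apply: sumr_ge0 => i _; exact: sqr_ge0. Qed.

Lemma powR_vnorm2 (x : tup) : vnorm x `^ 2 = vdot x x.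
Proof.
by rewrite -[2]/(2%:R) powR_mulrn ?sqrtr_ge0 // sqr_sqrtr // vdot_ge0.
Qed.

Lemma vdot_vsub_gt0 (x y : tup) : x <> y -> 0 < vdot (vsub x y) (vsub x y).
Proof.
move=> xy; rewrite lt_def vdot_ge0 andbT; apply: contra_notN xy => /eqP.
move=> /psumr_eq0P xy0; apply: eq_from_tnth => j.
have /eqP := xy0 (fun i _ => sqr_ge0 _) j isT.
by rewrite tnth_mktuple -expr2 sqrf_eq0 subr_eq0 => /eqP.
Qed.

Lemma frob_vsub_gt0 n (X Y : 'I_n -> tup) :
  X <> Y -> 0 < frob (fun i => vsub (X i) (Y i)).
Proof.
move=> XY; have [i XYi] : exists i, X i <> Y i.
  by apply: contra_notP XY => XY; apply/funext => i; apply: contra_notP XY; exists i.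
rewrite sqrtr_gt0 (bigD1 i) //= ltr_pwDl ?vdot_vsub_gt0 //.
by apply: sumr_ge0 => j _; exact: vdot_ge0.
Qed.

Lemma measurable_tuple_set1 (a : tup) : measurable [set a].
Proof.
have -> : [set a] =
    \bigcap_(i in [set: 'I_d]) ((fun x : tup => tnth x i) @^-1` [set tnth a i]).
  apply/seteqP; split => [x -> //|x xa].
  by apply: eq_from_tnth => i; exact: xa.
apply: fin_bigcap_measurable => [|i _]; first exact: finite_finset.
by rewrite -[X in measurable X]setTI; exact: measurable_tnth.
Qed.

Context dT (T : measurableType dT).

Lemma measurable_vdot (f g : T -> tup) :
  measurable_fun setT f -> measurable_fun setT g ->
  measurable_fun setT (fun z => vdot (f z) (g z)).
Proof.
move=> mf mg; apply: measurable_sum => i.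
by apply: measurable_funM; apply: measurableT_comp (measurable_tnth i) _.
Qed.

Lemma measurable_vsub (f g : T -> tup) :
  measurable_fun setT f -> measurable_fun setT g ->
  measurable_fun setT (fun z => vsub (f z) (g z)).
Proof.
move=> mf mg; apply/measurable_fun_tnthP => i.
rewrite /comp; under eq_fun do rewrite tnth_mktuple.
by apply: measurable_funB; apply: measurableT_comp (measurable_tnth i) _.
Qed.

Lemma measurable_mxapp k (M : 'M[R]_(k, d)) (f : T -> tup) :
  measurable_fun setT f -> measurable_fun setT (fun z => mxapp M (f z)).
Proof.
move=> mf; apply/measurable_fun_tnthP => i.
rewrite /comp; under eq_fun do rewrite tnth_mktuple.
apply: measurable_sum => j; apply: measurable_funM => //.
exact: measurableT_comp (measurable_tnth j) _.
Qed.

Lemma tnth_mxapp_sum k n (M : 'M[R]_(k, d)) (P : pred 'I_n) (a : 'I_n -> R)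
    (x : 'I_n -> tup) c :
  tnth (mxapp M [tuple \sum_(j < n | P j) a j * tnth (x j) l | l < d]) c =
  \sum_(j < n | P j) a j * tnth (mxapp M (x j)) c.
Proof.
rewrite tnth_mktuple; under eq_bigr do rewrite tnth_mktuple mulr_sumr.
rewrite exchange_big; apply: eq_bigr => j _.
by rewrite tnth_mktuple mulr_sumr; apply: eq_bigr => l _; rewrite mulrCA.
Qed.

End vectors.

Section dirac_couplings.
Local Open Scope ereal_scope.
Context (R : realType).

Lemma dirac_setX d1 d2 (T1 : measurableType d1) (T2 : measurableType d2)
    (a : T1) (b : T2) (A : set T1) (B : set T2) :
  \d_(a, b) (A `*` B) = \d_a A * \d_b B :> \bar R.
Proof.
rewrite !diracE -EFinM -natrM mulnb; congr ((nat_of_bool _)%:R%:E).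
by apply/idP/andP => [/set_mem[/mem_set ? /mem_set ?]|[/set_mem ? /set_mem ?]] //;
  exact/mem_set.
Qed.

Lemma probability_eq_dirac d (T : measurableType d) (P : probability T R) (c : T) :
  measurable [set c] -> P (~` [set c]) = 0 ->
  forall S, measurable S -> P S = \d_c S.
Proof.
move=> mc Pc0 S mS; have mCc := measurableC mc.
have null_off_c D : measurable D -> D `<=` ~` [set c] -> P D = 0.
  move=> mD Dc; apply/eqP; rewrite eq_le measure_ge0 andbT.
  by rewrite -Pc0 le_measure ?inE.
rewrite diracE; have [cS|cS] := boolP (c \in S).
  have SCc : ~` S `<=` ~` [set c] by move=> z Sz zc; apply: Sz; rewrite zc; exact/set_mem.
  have /eqP := null_off_c _ (measurableC mS) SCc.
  by rewrite probability_setC // sube_eq // add0e eq_sym => /eqP.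
by apply: null_off_c => // z Sz zc; move: cS; rewrite -zc => /negP; apply; exact/mem_set.
Qed.

Lemma coupling_dirac d1 d2 (T1 : measurableType d1) (T2 : measurableType d2)
    (gam : probability (T1 * T2)%type R) (a : T1) (b : T2) :
  measurable [set a] -> measurable [set b] ->
  (forall A, measurable A -> gam (A `*` setT) = \d_a A) ->
  (forall B, measurable B -> gam (setT `*` B) = \d_b B) ->
  forall S, measurable S -> gam S = \d_(a, b) S.
Proof.
move=> ma mb gam1 gam2.
have mab : measurable [set (a, b)].
  rewrite (_ : [set (a, b)] = [set a] `*` [set b]); first exact: measurableX.
  by apply/seteqP; split => -[x y] /= [-> ->].
apply: probability_eq_dirac => //.
have mCa : measurable (~` [set a] `*` [set: T2]).
  by apply: measurableX => //; exact: measurableC.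
have mCb : measurable ([set: T1] `*` ~` [set b]).
  by apply: measurableX => //; exact: measurableC.
have off_ab : ~` [set (a, b)] `<=` ~` [set a] `*` setT `|` setT `*` ~` [set b].
  move=> [x y] /= xyab; have [xa|] := pselect (x = a); last by left.
  by right; split => // yb; apply: xyab; rewrite xa yb.
apply/eqP; rewrite eq_le measure_ge0 andbT.
apply: le_trans (le_measure _ _ _ off_ab) _; rewrite ?inE.
- exact: measurableC.
- exact: measurableU.
apply: le_trans (measureU2 _ mCa mCb) _.
change (gam (~` [set a] `*` setT) + gam (setT `*` ~` [set b]) <= 0).
rewrite (gam1 _ (measurableC ma)) (gam2 _ (measurableC mb)).
by rewrite !diracE !memNset ?adde0 //= => /(_ erefl).
Qed.

End dirac_couplings.

Section wasserstein_dirac.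
Context (R : realType) (d : nat).
Local Notation tup := (d.-tuple R).
Local Open Scope ereal_scope.

Lemma Wp2_dirac (mu nu : set tup -> \bar R) (a b : tup) :
  (forall B, measurable B -> mu B = \d_a B) ->
  (forall B, measurable B -> nu B = \d_b B) ->
  Wp 2 mu nu = (vnorm (vsub a b))%:E.
Proof.
move=> mua nub.
pose cost (z : tup * tup) : \bar R := ((vnorm (vsub z.1 z.2)) `^ 2)%:E.
have mcost : measurable_fun setT cost.
  apply/measurable_EFinP; under eq_fun do rewrite powR_vnorm2.
  by apply: measurable_vdot; apply: measurable_vsub.
have dirac_marginals :
    (forall A, measurable A -> \d_(a, b) (A `*` setT) = mu A) /\
    (forall B, measurable B -> \d_(a, b) (setT `*` B) = nu B).
  by split=> A mA; rewrite dirac_setX diracT ?mule1 ?mul1e ?mua ?nub.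
have cost_coupling (gam : probability (tup * tup)%type R) :
    (forall A, measurable A -> gam (A `*` setT) = mu A) ->
    (forall B, measurable B -> gam (setT `*` B) = nu B) ->
    \int[gam]_z cost z = cost (a, b).
  move=> gam1 gam2; rewrite (eq_measure_integral \d_(a, b)) => [|S mS _].
    by rewrite integral_dirac // diracT mul1e.
  apply: coupling_dirac => //; [exact: measurable_tuple_set1..| |].
  - by move=> A mA; rewrite gam1 // mua.
  - by move=> B mB; rewrite gam2 // nub.
rewrite /Wp (_ : [set c | _] = [set cost (a, b)]).
  by rewrite ereal_inf1 poweR_EFin -powRrM mulfV // powRr1 // sqrtr_ge0.
apply/seteqP; split => c /=.
  by move=> [gam [gam1 gam2 ->]]; exact: cost_coupling.
move=> ->; have [dirac1 dirac2] := dirac_marginals.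
by exists (\d_(a, b) : probability _ R); split => //; rewrite cost_coupling.
Qed.

End wasserstein_dirac.

Lemma ge0_le_integral_nonmeasurable d (T : measurableType d) (R : realType)
    (mu : {measure set T -> \bar R}) (f g : T -> \bar R) :
  (forall x, (0 <= f x)%E) -> (forall x, (f x <= g x)%E) ->
  (\int[mu]_x f x <= \int[mu]_x g x)%E.
Proof.
move=> f0 fg; have g0 x : (0 <= g x)%E := le_trans (f0 x) (fg x).
rewrite !ge0_integralE //= !patch_setT.
apply: ge_ereal_sup => _ [h hf <-]; apply: ereal_sup_ubound; exists h => //.
by move=> x; exact: le_trans (hf x) (fg x).
Qed.

Section token_measure.
Context (R : realType) (m d : nat).
Local Notation tup := (d.-tuple R).
Local Notation w := ((m.+1%:R)^-1 : R).
Local Open Scope ereal_scope.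

Definition token_measure (X : 'I_m.+1 -> tup) : probability (R * tup)%type R :=
  empirical (fun i => (position i, X i)).

Lemma token_measure_setXT X A :
  token_measure X (A `*` setT) = empirical (@position R m) A.
Proof.
rewrite /token_measure /empirical; congr (_ * _).
by apply: eq_bigr => i _; rewrite dirac_setX diracT mule1.
Qed.

Lemma token_measure_set1X X i B :
  token_measure X ([set position i] `*` B) = w%:E * \d_(X i) B.
Proof.
rewrite /token_measure /= /empirical (bigD1 i) //= big1 ?adde0 => [|j ji].
  by rewrite dirac_setX diracE mem_set // mul1e.
rewrite dirac_setX diracE memNset ?mul0e //= => /position_inj/eqP.
by rewrite (negbTE ji).
Qed.

Lemma token_measure_same_first_marginal X Y :
  same_first_marginal (token_measure X) (token_measure Y).
Proof. by move=> A _; rewrite !token_measure_setXT. Qed.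

Lemma token_measure_inj X Y :
  (token_measure X : set _ -> \bar R) = token_measure Y -> X = Y.
Proof.
move=> XY; apply/funext => i.
have := congr1 (fun mu : set _ -> \bar R => mu ([set position i] `*` [set X i])) XY.
rewrite /= !token_measure_set1X !diracE mem_set // -!EFinM.
have w_neq0 : (w != 0)%R by rewrite invr_neq0 // pnatr_eq0.
case=> /eqP; rewrite (inj_eq (mulfI w_neq0)) eqr_nat.
by have [/set_mem ->|] := boolP (Y i \in [set X i]).
Qed.

Lemma token_measure_Psupp (r : R) X : (forall i, cball r (X i)) ->
  Psupp r (token_measure X).
Proof.
move=> Xr; rewrite /Psupp /= /token_measure /empirical big1 ?mule0 // => i _.
by rewrite diracE memNset //= => -[]; split; [exact: position_itv | exact: Xr].
Qed.

End token_measure.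

Section token_disintegration.
Context (R : realType) (m d : nat).
Local Notation tup := (d.-tuple R).
Local Notation w := ((m.+1%:R)^-1 : R).

Definition at_position (X : 'I_m.+1 -> tup) (t : R) : tup :=
  [tuple \sum_(i < m.+1) \1_[set position i] t * tnth (X i) j | j < d].

Lemma at_positionE X i : at_position X (position i) = X i.
Proof.
apply: eq_from_tnth => j; rewrite tnth_mktuple.
exact: (sum_indic_inj (fun i => tnth (X i) j) _ (@position_inj R m)).
Qed.

Lemma measurable_at_position X : measurable_fun setT (at_position X).
Proof.
apply/measurable_fun_tnthP => j; rewrite /comp.
under eq_fun do rewrite tnth_mktuple.
by apply: measurable_sum => i; apply: measurable_funM.
Qed.

Local Open Scope ereal_scope.

Lemma token_measure_disintegration X :
  disintegration (token_measure X) (empirical (@position R m))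
    (fun t => \d_(at_position X t) : probability tup R).
Proof.
have dirac_at B : measurable B ->
    measurable_fun setT (fun t => \d_(at_position X t) B : \bar R).
  move=> mB; rewrite (_ : (fun t => _) = EFin \o (\1_B \o at_position X)).
    apply/measurable_EFinP.
    exact: measurableT_comp (measurable_indic mB) (measurable_at_position X).
  by apply/funext => t; rewrite /= diracE indicE.
split => // A B mA mB.
rewrite integral_mkcond ge0_integral_empirical; last 2 first.
- by apply/(measurable_restrictT _ _).1 => //; exact: measurable_funTS (dirac_at B mB).
- by move=> t; rewrite /patch; case: ifP.
rewrite /token_measure /= /empirical; congr (_ * _); apply: eq_bigr => i _.
by rewrite dirac_setX /patch at_positionE diracE; case: ifP; rewrite ?mul1e ?mul0e.
Qed.

Lemma token_measure_disintegration_inv (X : 'I_m.+1 -> tup) theta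
    (muk : R -> probability tup R) :
  disintegration (token_measure X) theta muk ->
  (forall A, measurable A -> theta A = empirical (@position R m) A) /\
  (forall i B, measurable B -> muk (position i) B = \d_(X i) B).
Proof.
move=> [_ disX].
have thetaE A : measurable A -> theta A = empirical (@position R m) A.
  move=> mA; rewrite -(token_measure_setXT X) disX //.
  under eq_integral do rewrite probability_setT.
  by rewrite integral_cst // mul1e.
split => // i B mB; have mi := measurable_set1 (position i : R).
have := disX _ _ mi mB; rewrite token_measure_set1X.
rewrite (eq_integral (cst (muk (position i) B))) => [|t /set_mem -> //].
rewrite integral_cst // => wmu.
have theta_i : theta [set position i] = w%:E.
  by rewrite thetaE // -(token_measure_setXT X) token_measure_set1X diracT mule1.
have {}wmu : w%:E * \d_(X i) B = w%:E * muk (position i) B.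
  by rewrite wmu muleC; congr (_ * _); exact: theta_i.
have w_neq0 : (w != 0)%R by rewrite invr_neq0 // pnatr_eq0.
rewrite -[LHS]mul1e -(mulVf w_neq0) EFinM -muleA -wmu.
by rewrite muleA -EFinM mulVf // mul1r.
Qed.

End token_disintegration.

Section token_distance.
Context (R : realType) (m d : nat).
Local Notation tup := (d.-tuple R).
Local Notation w := ((m.+1%:R)^-1 : R).
Local Notation sqdist X Y :=
  (\sum_(i < m.+1) vdot (vsub (X i) (Y i)) (vsub (X i) (Y i))).

Let powR_mean_sqdist (X Y : 'I_m.+1 -> tup) :
  (w * sqdist X Y) `^ 2^-1 = Num.sqrt w * frob (fun i => vsub (X i) (Y i)).
Proof.
rewrite powR12_sqrt ?sqrtrM ?invr_ge0 // mulr_ge0 ?invr_ge0 // sumr_ge0 // => i _.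
exact: vdot_ge0.
Qed.

Local Open Scope ereal_scope.

Lemma dp_token_measure_le (X Y : 'I_m.+1 -> tup) :
  dp 2 (token_measure X) (token_measure Y) <=
  (Num.sqrt w * frob (fun i => vsub (X i) (Y i)))%:E.
Proof.
apply: ereal_inf_lbound; exists (empirical (@position R m)),
  (fun t => \d_(at_position X t) : probability tup R),
  (fun t => \d_(at_position Y t) : probability tup R).
split; [exact: token_measure_disintegration | exact: token_measure_disintegration |].
under eq_integral do
  rewrite (Wp2_dirac (fun _ _ => erefl) (fun _ _ => erefl)) poweR_EFin powR_vnorm2.
rewrite integral_empirical; last first.
  by apply: measurable_vdot; apply: measurable_vsub; exact: measurable_at_position.
rewrite poweR_EFin -powR_mean_sqdist.
by congr ((_ * _) `^ _)%:E; apply: eq_bigr => i _; rewrite !at_positionE.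
Qed.

Lemma dp_token_measure_ge (X Y : 'I_m.+1 -> tup) :
  (Num.sqrt w * frob (fun i => vsub (X i) (Y i)))%:E <=
  dp 2 (token_measure X) (token_measure Y).
Proof.
apply: le_ereal_inf_tmp => _ [theta [muk [nuk [disX disY ->]]]].
have [thetaE mukE] := token_measure_disintegration_inv disX.
have [_ nukE] := token_measure_disintegration_inv disY.
pose v i := vdot (vsub (X i) (Y i)) (vsub (X i) (Y i)).
(* [t |-> W_2(muk t, nuk t)] need not be measurable: bound its square from
   below by the measurable step function [H]. *)
pose H (t : R) := (\sum_(i < m.+1) \1_[set position i] t * v i)%R%:E.
have H_ge0 t : 0 <= H t.
  by rewrite lee_fin sumr_ge0 // => i _; rewrite mulr_ge0 ?vdot_ge0 // indicE ler0n.
have H_le t : H t <= Wp 2 (muk t) (nuk t) `^ 2.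
  have [[i ->]|t_off] := pselect (exists i : 'I_m.+1, t = position i).
    rewrite /H sum_indic_inj ?(Wp2_dirac (mukE i) (nukE i)) ?poweR_EFin ?powR_vnorm2 //.
    exact: position_inj.
  rewrite /H big1 ?poweR_ge0 // => i _.
  by rewrite indicE memNset ?mul0r // => ti; apply: t_off; exists i.
have intH : \int[theta]_t H t = (w * sqdist X Y)%:E.
  rewrite (eq_measure_integral (empirical (@position R m))) => [|A mA _];
    last exact: thetaE.
  rewrite integral_empirical; last first.
    by apply: measurable_sum => i; apply: measurable_funM.
  congr (_ * _)%:E; apply: eq_bigr => i _.
  by rewrite sum_indic_inj //; exact: position_inj.
rewrite -powR_mean_sqdist -poweR_EFin -intH.
apply: gt0_ler_poweR => //; rewrite ?in_itv /= ?leey ?andbT ?integral_ge0 //.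
  by move=> t _; exact: poweR_ge0.
exact: ge0_le_integral_nonmeasurable.
Qed.

Lemma dp_token_measure (X Y : 'I_m.+1 -> tup) :
  dp 2 (token_measure X) (token_measure Y) =
  (Num.sqrt w * frob (fun i => vsub (X i) (Y i)))%:E.
Proof. by apply/le_anti; rewrite dp_token_measure_le dp_token_measure_ge. Qed.

End token_distance.

Section attention.
Context (R : realType) (m d k : nat) (A : 'M[R]_d) (V : 'M[R]_(k, d)).
Local Notation tup := (d.-tuple R).

Lemma Gamma_token_measure (X : 'I_m.+1 -> tup) i :
  Gamma A V (token_measure X) (position i, X i) = (position i, masked_sa A V X i).
Proof.
rewrite /Gamma /=; congr (_, _); apply: eq_from_tnth => c.
rewrite tnth_mktuple /masked_sa tnth_mxapp_sum.
have mexp : measurable_fun setT (fun z : R * tup => expR (vdot (mxapp A (X i)) z.2)).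
  apply: measurableT_comp; first exact: measurable_expR.
  exact: measurable_vdot (measurable_cst _) measurable_snd.
have mle := measurable_fst_le (T := tup) (position i : R).
have mVc : measurable_fun setT (fun z : R * tup => tnth (mxapp V z.2) c).
  exact: measurableT_comp (measurable_tnth c) (measurable_mxapp V measurable_snd).
have mnum := measurable_funM (measurable_funM mexp mVc) mle.
have mden := measurable_funM mexp mle.
rewrite !Rintegral_empirical //=.
rewrite -mulf_div divff ?mul1r ?invr_neq0 ?pnatr_eq0 //.
pose e (j : 'I_m.+1) := expR (vdot (mxapp A (X i)) (X j)).
rewrite (sum_mask_position (fun j => e j * tnth (mxapp V (X j)) c)).
rewrite (sum_mask_position e) mulr_suml.
by apply: eq_bigr => j _; rewrite /mask_weight mulrAC.
Qed.

Lemma Fm_token_measure (X : 'I_m.+1 -> tup) :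
  Fm A V (token_measure X) = token_measure (masked_sa A V X).
Proof.
rewrite /Fm pushforward_empirical; congr empirical; apply/funext => i /=.
exact: Gamma_token_measure.
Qed.

End attention.

Theorem mainTheorem9 (R : realType) (r : R) (n d k : nat) (Q K V : 'M[R]_(k, d)) :
  0 < r ->
  (Lip_frob (@masked_sa R n d k (attnA Q K) V) [set X | forall i, cball r (X i)]
   <= Lip_dp 2 (Fm (attnA Q K) V) (Psupp r))%E.
Proof.
move=> _; apply: ge_ereal_sup => _ [X [Y [Xr Yr XY ->]]].
case: n X Y Xr Yr XY => [|m] X Y Xr Yr XY.
  by case: XY; apply/funext => -[].
apply: ereal_sup_ubound; exists (token_measure X), (token_measure Y); split.
- exact: token_measure_Psupp.
- exact: token_measure_Psupp.
- by move/token_measure_inj.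
- exact: token_measure_same_first_marginal.
have w_gt0 : 0 < Num.sqrt ((m.+1%:R)^-1 : R) by rewrite sqrtr_gt0 invr_gt0 ltr0n.
rewrite !Fm_token_measure !dp_token_measure inver gt_eqF ?mulr_gt0 ?frob_vsub_gt0 //.
by rewrite -EFinM invfM mulrACA divff ?mul1r ?gt_eqF.
Qed.
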